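(* Let $(X(t))_{t\ge 0}$ be a reversible irreducible continuous-time Markov chain on a finite state space $\Omega$ with semigroup $P_t$ and stationary distribution $\pi$. Define \[ d^H(t):=\max_{x\in\Omega}\sqrt{\sum_{y\in\Omega}\Big(\sqrt{P_t(x,y)}-\sqrt{\pi(y)}\Big)^2}. \] Then for every $t\ge 0$, \[ d^H(2t)\le 7\,\big(d^H(t)\big)^{5/4}. \] *)

From HB Require Import structures.
From mathcomp Require Import all_boot all_order all_algebra.
From mathcomp Require Import all_classical all_reals all_analysis.
Set Implicit Arguments. Unset Strict Implicit. Unset Printing Implicit Defensive.
Import Order.TTheory GRing.Theory Num.Theory.
Local Open Scope ring_scope.

(* State space Omega = 'I_n.+1 (finite, nonempty). A continuous-time Markov
   chain is given by its generator (rate) matrix Q. *)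
Definition is_generator (R : realType) (n : nat) (Q : 'M[R]_n.+1) : Prop :=
  (forall x y, x != y -> 0 <= Q x y) /\ (forall x, \sum_y Q x y = 0).

Definition irreducible (R : realType) (n : nat) (Q : 'M[R]_n.+1) : Prop :=
  forall x y, connect (fun a b => (a != b) && (0 < Q a b)) x y.

Definition is_distribution (R : realType) (n : nat) (pi : 'I_n.+1 -> R) : Prop :=
  (forall x, 0 <= pi x) /\ \sum_x pi x = 1.

Definition stationary (R : realType) (n : nat) (Q : 'M[R]_n.+1) (pi : 'I_n.+1 -> R) : Prop :=
  forall y, \sum_x pi x * Q x y = 0.

Definition reversible (R : realType) (n : nat) (Q : 'M[R]_n.+1) (pi : 'I_n.+1 -> R) : Prop :=
  forall x y, pi x * Q x y = pi y * Q y x.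

Definition semigroup (R : realType) (n : nat) (Q : 'M[R]_n.+1) (t : R)
  (x y : 'I_n.+1) : R :=
  limn (fun N : nat => \sum_(k < N) (t ^+ k / (k`!)%:R) * (Q ^+ k) x y).

Definition dH (R : realType) (n : nat) (Q : 'M[R]_n.+1) (pi : 'I_n.+1 -> R) (t : R) : R :=
  \big[Num.max/0]_(x : 'I_n.+1)
     Num.sqrt (\sum_(y : 'I_n.+1)
        (Num.sqrt (semigroup Q t x y) - Num.sqrt (pi y)) ^+ 2).

(* Let P = P_t; it is stochastic, entrywise nonnegative and reversible with
   respect to pi, and pi > 0 by irreducibility. Write
   a_x(z) = sqrt (P(x,z) / pi(z)) = 1 + u_x(z). Reversibility makes a symmetric
   in x and z, so every row and every column of u has pi-weighted L2 norm at
   most d = d^H(t). Since P_{2t} = P^2 and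
   P^2(x,y) = pi(y) * sum_z pi(z) a_x(z)^2 a_y(z)^2, expanding a^2 - 1 = 2u + u^2
   shows that P^2(x,y)/pi(y) - 1 is 4 <u_x, u_y>_pi up to cubic terms, and
   Cauchy-Schwarz bounds the squared Hellinger distance from row x of P^2 to pi
   by 8 d^3 + 66 d^4. Together with the trivial bound 2 this is at most
   49 d^(5/2). The semigroup law exp((s1 + s2) Q) = exp(s1 Q) exp(s2 Q) is
   obtained by comparing the truncated Cauchy product of the matrix series with
   that of the scalar exponential series of the entrywise l1 norms. *)

From HB Require Import structures.
From mathcomp Require Import all_boot all_order all_algebra.
From mathcomp Require Import all_classical all_reals all_analysis.
From mathcomp Require Import ring lra zify.
Set Implicit Arguments. Unset Strict Implicit. Unset Printing Implicit Defensive.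
Import Order.TTheory GRing.Theory Num.Theory numFieldNormedType.Exports.
Local Open Scope ring_scope.
Local Open Scope classical_set_scope.

Lemma sum_antidiagonal (V : nmodType) (f : nat -> nat -> V) (N M : nat) :
  (N <= M)%N ->
  \sum_(k < N) \sum_(i < k.+1) f (k - i)%N i =
  \sum_(i < M) \sum_(j < M | (i + j < N)%N) f i j.
Proof.
elim: N => [|N IH] leNM.
  by rewrite big_ord0 big1 // => i _; rewrite big_pred0.
rewrite big_ord_recr /= IH ?(ltnW leNM) //.
have -> : \sum_(i < M) \sum_(j < M | (i + j < N.+1)%N) f i j =
   \sum_(i < M) (\sum_(j < M | (i + j < N)%N) f i j
               + \sum_(j < M | (i + j == N)%N) f i j).
  apply: eq_bigr => i _; rewrite (bigID (fun j : 'I_M => (i + j < N)%N)) /=.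
  by congr (_ + _); apply: eq_bigl => j; rewrite ltnS leq_eqVlt;
    case: (ltngtP (i + j) N).
rewrite big_split /=; congr (_ + _).
rewrite (eq_bigr (fun i : 'I_M => \sum_(j < M) if (i + j == N)%N then f i j else 0));
  last by move=> i _; rewrite big_mkcond.
rewrite exchange_big /= (big_ord_widen _ (fun j => f (N - j)%N j) leNM) big_mkcond.
apply: eq_bigr => j _; case: (ltnP j N.+1) => ltjN.
  have ltNj : (N - j < M)%N by lia.
  rewrite (bigD1 (Ordinal ltNj)) //= ifT; last by apply/eqP; lia.
  rewrite big1 ?addr0 // => i /eqP neqi; case: eqP => // /eqP eqN.
  by case: neqi; apply: val_inj => /=; lia.
by rewrite big1 // => i _; rewrite ifF //; apply/negbTE/eqP; lia.
Qed.

Lemma invfact_bin (R : numFieldType) (k i : nat) : (i <= k)%N ->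
  (k`!%:R)^-1 * 'C(k, i)%:R = ((k - i)`!%:R)^-1 * (i`!%:R)^-1 :> R.
Proof.
move=> leik; have := bin_fact leik; move/(congr1 (fun k => k%:R : R)).
rewrite !natrM => eq_fact.
have nz_fact (j : nat) : (j`!%:R : R) != 0 by rewrite pnatr_eq0 -lt0n fact_gt0.
rewrite -eq_fact; field.
by rewrite !nz_fact pnatr_eq0 -lt0n bin_gt0 leik.
Qed.

Section ExpPartial.
Context {R : numFieldType} {V : algType R}.

Definition exp_partial (x : V) (N : nat) : V :=
  \sum_(k < N) (k`!%:R)^-1 *: x ^+ k.

Lemma exp_partialD (x y : V) (N M : nat) : GRing.comm x y -> (N <= M)%N ->
  exp_partial (x + y) N =
  \sum_(i < M) \sum_(j < M | (i + j < N)%N)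
     ((i`!%:R)^-1 * (j`!%:R)^-1) *: (x ^+ i * y ^+ j).
Proof.
move=> cxy leNM.
rewrite -(sum_antidiagonal
  (fun i j => ((i`!%:R)^-1 * (j`!%:R)^-1) *: (x ^+ i * y ^+ j)) leNM).
apply: eq_bigr => k _.
rewrite exprDn_comm // scaler_sumr; apply: eq_bigr => i _.
by rewrite -scalerMnr scalerMnl -mulr_natr invfact_bin // -ltnS.
Qed.

Lemma exp_partialM (x y : V) (N : nat) :
  exp_partial x N * exp_partial y N =
  \sum_(i < N) \sum_(j < N) ((i`!%:R)^-1 * (j`!%:R)^-1) *: (x ^+ i * y ^+ j).
Proof.
rewrite /exp_partial mulr_suml; apply: eq_bigr => i _; rewrite mulr_sumr.
by apply: eq_bigr => j _; rewrite -scalerAl -scalerAr scalerA.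
Qed.

Lemma exp_partialM_subD (x y : V) (N : nat) : GRing.comm x y ->
  exp_partial x N * exp_partial y N - exp_partial (x + y) N =
  \sum_(i < N) \sum_(j < N | (N <= i + j)%N)
     ((i`!%:R)^-1 * (j`!%:R)^-1) *: (x ^+ i * y ^+ j).
Proof.
move=> cxy; rewrite exp_partialM (exp_partialD cxy (leqnn N)) -sumrB.
apply: eq_bigr => i _; rewrite [X in X - _](bigID (fun j : 'I_N => (i + j < N)%N)) /=.
rewrite addrAC subrr add0r.
by apply: eq_bigl => j; rewrite -leqNgt.
Qed.

End ExpPartial.

Lemma exp_partial_series (R : realType) (a : R) (N : nat) :
  exp_partial (a : R^o) N = series (exp_coeff a) N.
Proof. by rewrite seriesEord; apply: eq_bigr => k _; rewrite /exp_coeff /= mulrC. Qed.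

Section MxNorm1.
Context {R : numDomainType} {m : nat}.
Implicit Types A B : 'M[R]_m.+1.

Definition mxnorm1 A : R := \sum_i \sum_j `|A i j|.

Lemma mxnorm1_ge0 A : 0 <= mxnorm1 A.
Proof. by apply: sumr_ge0 => i _; apply: sumr_ge0. Qed.

Lemma mxnorm1_row A i : \sum_j `|A i j| <= mxnorm1 A.
Proof.
rewrite /mxnorm1 [leRHS](bigD1 i) //= lerDl.
by apply: sumr_ge0 => k _; apply: sumr_ge0.
Qed.

Lemma mxnorm1_entry A i j : `|A i j| <= mxnorm1 A.
Proof.
apply: le_trans (mxnorm1_row A i).
by rewrite [leRHS](bigD1 j) //= lerDl; apply: sumr_ge0.
Qed.

Lemma mxnorm1_1 : mxnorm1 1 = m.+1%:R.
Proof.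
rewrite /mxnorm1 (eq_bigr (fun _ => 1)) ?sumr_const ?card_ord // => i _.
rewrite (bigD1 i) //= big1 ?addr0 => [|j /negbTE neq_ji]; rewrite mxE.
  by rewrite eqxx normr1.
by rewrite eq_sym neq_ji normr0.
Qed.

Lemma mxnorm1M A B : mxnorm1 (A * B) <= mxnorm1 A * mxnorm1 B.
Proof.
rewrite /mxnorm1 -mulmxE.
apply: (@le_trans _ _ (\sum_i \sum_j \sum_z `|A i z| * `|B z j|)).
  apply: ler_sum => i _; apply: ler_sum => j _; rewrite mxE.
  by apply: le_trans (ler_norm_sum _ _ _) _; apply: ler_sum => z _; rewrite normrM.
rewrite mulr_suml; apply: ler_sum => i _.
rewrite exchange_big /= mulr_suml; apply: ler_sum => z _.
by rewrite -mulr_sumr ler_wpM2l // mxnorm1_row.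
Qed.

Lemma mxnorm1X A k : mxnorm1 (A ^+ k) <= m.+1%:R * mxnorm1 A ^+ k.
Proof.
elim: k => [|k IH]; first by rewrite !expr0 mxnorm1_1 mulr1.
rewrite exprSr (le_trans (mxnorm1M _ _)) // exprSr mulrA.
by rewrite ler_wpM2r ?mxnorm1_ge0.
Qed.

End MxNorm1.

Section MatrixExponential.
Context {R : realType} {m : nat}.
Implicit Types A B : 'M[R]_m.+1.

Definition expmx A : 'M[R]_m.+1 :=
  \matrix_(i, j) limn (fun N => exp_partial A N i j).

Lemma exp_partial_mxE A N i j :
  exp_partial A N i j = \sum_(k < N) (k`!%:R)^-1 * (A ^+ k) i j.
Proof. by rewrite summxE; apply: eq_bigr => k _; rewrite mxE. Qed.

(* Each entry of the series is dominated by [m.+1] times the exponential series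
   of [mxnorm1 A]. *)
Lemma exp_partial_cvg A i j : exp_partial A N i j @[N --> \oo] --> expmx A i j.
Proof.
rewrite mxE; rewrite (_ : (fun N => _) = series
  (fun k => (k`!%:R)^-1 * (A ^+ k) i j)); last first.
  by apply/funext => N; rewrite exp_partial_mxE seriesEord.
apply: normed_cvg.
apply: (@series_le_cvg _ _ (fun k => m.+1%:R * exp_coeff (mxnorm1 A) k)).
- by move=> k; rewrite /= normr_ge0.
- by move=> k; rewrite mulr_ge0 // exp_coeff_ge0 // mxnorm1_ge0.
- move=> k /=; rewrite normrM ger0_norm ?invr_ge0 //.
  rewrite /exp_coeff /= mulrA [leRHS]mulrC ler_wpM2l ?invr_ge0 //.
  exact: le_trans (mxnorm1_entry _ i j) (mxnorm1X _ _).
- rewrite (_ : (fun k => _) = m.+1%:R *: exp_coeff (mxnorm1 A)) //.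
  exact: is_cvg_seriesZ (is_cvg_series_exp_coeff _).
Qed.

Lemma exp_partialM_subD_le A B N i j : GRing.comm A B ->
  `|(exp_partial A N * exp_partial B N - exp_partial (A + B) N) i j| <=
  m.+1%:R ^+ 2 * (series (exp_coeff (mxnorm1 A)) N * series (exp_coeff (mxnorm1 B)) N
                  - series (exp_coeff (mxnorm1 A + mxnorm1 B)) N).
Proof.
move=> cAB; rewrite -!exp_partial_series.
rewrite !exp_partialM_subD //; last exact: mulrC.
rewrite summxE mulr_sumr; apply: le_trans (ler_norm_sum _ _ _) _.
apply: ler_sum => k _; rewrite summxE mulr_sumr.
apply: le_trans (ler_norm_sum _ _ _) _; apply: ler_sum => l _.
rewrite mxE normrM ger0_norm ?mulr_ge0 ?invr_ge0 // mulrCA ler_wpM2l ?mulr_ge0 ?invr_ge0 //.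
apply: le_trans (mxnorm1_entry _ i j) _; apply: le_trans (mxnorm1M _ _) _.
rewrite expr2 mulrACA.
by apply: ler_pM; rewrite ?mxnorm1_ge0 ?mxnorm1X.
Qed.

Lemma expmxD A B : GRing.comm A B -> expmx (A + B) = expmx A * expmx B.
Proof.
move=> cAB; apply/matrixP => x y.
set a := mxnorm1 A; set b := mxnorm1 B.
have cvg_prod : (exp_partial A N * exp_partial B N) x y @[N --> \oo] -->
    (expmx A * expmx B) x y.
  rewrite (_ : (fun N => _) =
    (fun N => \sum_z exp_partial A N x z * exp_partial B N z y)); last first.
    by apply/funext => N; rewrite -mulmxE mxE.
  rewrite -mulmxE mxE.
  apply: cvg_big => [|z _]; first exact: add_continuous.
  by apply: cvgM; apply: exp_partial_cvg.
have cvg_err : m.+1%:R ^+ 2 * (series (exp_coeff a) N * series (exp_coeff b) N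
    - series (exp_coeff (a + b)) N) @[N --> \oo] --> (0 : R).
  rewrite -(mulr0 (m.+1%:R ^+ 2)) -(subrr (expR (a + b))); apply: cvgMl_tmp.
  rewrite [X in X - _]expRD; apply: cvgB; first apply: cvgM.
  - exact: is_cvg_series_exp_coeff a.
  - exact: is_cvg_series_exp_coeff b.
  - exact: is_cvg_series_exp_coeff (a + b).
have cvg_diff : (exp_partial A N * exp_partial B N - exp_partial (A + B) N) x y
    @[N --> \oo] --> (0 : R).
  apply/norm_cvg0P; apply: (squeeze_cvgr _ (cvg_cst 0) cvg_err).
  by apply: nearW => N; rewrite normr_ge0 exp_partialM_subD_le.
rewrite [LHS]mxE; apply: cvg_lim => //.
rewrite (_ : (fun N => _) = (fun N => (exp_partial A N * exp_partial B N) x y -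
    (exp_partial A N * exp_partial B N - exp_partial (A + B) N) x y)).
  by rewrite -[X in _ --> X]subr0; apply: cvgB.
by apply/funext => N; rewrite !mxE opprB addrCA subrr addr0.
Qed.

End MatrixExponential.

Section MatrixExponentialProperties.
Context {R : realType} {m : nat}.
Implicit Types A B : 'M[R]_m.+1.

Lemma expmx_scalar (a : R) : expmx (a%:M : 'M[R]_m.+1) = (expR a)%:M.
Proof.
apply/matrixP => i j; rewrite [RHS]mxE -mulr_natr mxE.
have -> : (fun N => exp_partial (a%:M : 'M[R]_m.+1) N i j) =
          (fun N => series (exp_coeff a) N * (i == j)%:R).
  apply/funext => N; rewrite exp_partial_mxE -exp_partial_series /exp_partial.
  rewrite mulr_suml; apply: eq_bigr => k _.
  by rewrite -rmorphXn mxE mulr_natr mulrnAr.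
apply: cvg_lim => //; apply: cvgM; last exact: cvg_cst.
exact: (@is_cvg_series_exp_coeff R a).
Qed.

Lemma expmx_ge0 A : (forall i j, 0 <= A i j) -> forall i j, 0 <= expmx A i j.
Proof.
move=> A_ge0.
have pow_ge0 k i j : 0 <= (A ^+ k) i j.
  elim: k i j => [|k IH] i j; first by rewrite expr0 mxE ler0n.
  by rewrite exprSr -mulmxE mxE; apply: sumr_ge0 => z _; rewrite mulr_ge0.
move=> i j; have := @exp_partial_cvg _ _ A i j; rewrite mxE => cvgA.
apply: limr_ge cvgA _; apply: nearW => N; rewrite exp_partial_mxE.
by apply: sumr_ge0 => k _; rewrite mulr_ge0 ?invr_ge0.
Qed.

(* [A + c%:M] is entrywise nonnegative for large [c], and it commutes with
   [(- c)%:M], whose exponential is a positive scalar. *)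
Lemma expmx_offdiag_ge0 A : (forall i j, i != j -> 0 <= A i j) ->
  forall i j, 0 <= expmx A i j.
Proof.
move=> A_offdiag x y; set c := \sum_i `|A i i|.
have shift_ge0 i j : 0 <= (A + c%:M) i j.
  rewrite !mxE; have [<-|neq_ij] := eqVneq i j; last by rewrite addr0 A_offdiag.
  have le_c : `|A i i| <= c by rewrite /c (bigD1 i) //= lerDl sumr_ge0.
  by rewrite mulr1n; move: (lerNnormlW le_c); lra.
have -> : A = (A + c%:M) + (- c)%:M by rewrite raddfN addrK.
rewrite expmxD; last by rewrite /GRing.comm -!mulmxE scalar_mxC.
rewrite expmx_scalar -mulmxE mxE; apply: sumr_ge0 => z _.
apply: mulr_ge0; first exact: expmx_ge0.
by rewrite mxE mulrn_wge0 ?expR_ge0.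
Qed.

Lemma expr_rowsum A k : (forall x, \sum_y A x y = 0) ->
  forall x, \sum_y (A ^+ k) x y = (k == 0)%:R.
Proof.
move=> A_rowsum x; case: k => [|k].
  rewrite expr0 (bigD1 x) //= big1 ?mxE ?eqxx ?addr0 // => y neq_yx.
  by rewrite mxE eq_sym (negbTE neq_yx).
rewrite exprSr -mulmxE; under eq_bigr do rewrite mxE.
by rewrite exchange_big big1 //= => z _; rewrite -mulr_sumr A_rowsum mulr0.
Qed.

Lemma expmx_rowsum A : (forall x, \sum_y A x y = 0) ->
  forall x, \sum_y expmx A x y = 1.
Proof.
move=> A_rowsum x.
have cvg_rowsum : \sum_y exp_partial A N x y @[N --> \oo] --> \sum_y expmx A x y.
  apply: cvg_big => [|y _]; [exact: add_continuous | exact: exp_partial_cvg].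
rewrite -(cvg_lim _ cvg_rowsum) //; apply: lim_near_cst => //.
near=> N; have N_gt0 : (0 < N)%N by near: N; exact: nbhs_infty_gt.
under eq_bigr do rewrite exp_partial_mxE.
rewrite exchange_big /= -(prednK N_gt0) big_ord_recl [X in _ + X]big1 => [|k _].
  by rewrite -mulr_sumr expr_rowsum // fact0 invr1 mulr1 addr0.
by rewrite -mulr_sumr expr_rowsum // mulr0.
Unshelve. all: by end_near.
Qed.

Lemma expr_reversible A (p : 'I_m.+1 -> R) k :
  (forall x y, p x * A x y = p y * A y x) ->
  forall x y, p x * (A ^+ k) x y = p y * (A ^+ k) y x.
Proof.
move=> A_rev; elim: k => [|k IH] x y.
  by rewrite expr0 !mxE eq_sym; case: eqP => [->|]; rewrite ?mulr0.
rewrite {1}exprSr {1}exprS -!mulmxE !mxE !mulr_sumr; apply: eq_bigr => z _.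
by rewrite mulrA IH mulrAC A_rev -mulrA.
Qed.

Lemma expmx_reversible A (p : 'I_m.+1 -> R) :
  (forall x y, p x * A x y = p y * A y x) ->
  forall x y, p x * expmx A x y = p y * expmx A y x.
Proof.
move=> A_rev x y.
have weighted_cvg u v : p u * exp_partial A N u v @[N --> \oo] --> p u * expmx A u v.
  by apply: cvgMl_tmp; exact: exp_partial_cvg.
rewrite -(cvg_lim _ (weighted_cvg x y)) // -(cvg_lim _ (weighted_cvg y x)) //.
congr (limn _); apply/funext => N; rewrite !exp_partial_mxE !mulr_sumr; apply: eq_bigr => k _.
by rewrite mulrCA expr_reversible // mulrCA.
Qed.

End MatrixExponentialProperties.


Section WeightedSums.
Context {R : realFieldType} {I : finType} (w : I -> R).
Hypothesis w_ge0 : forall i, 0 <= w i.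

Lemma weighted_CauchySchwarz (f g : I -> R) :
  (\sum_i w i * f i * g i) ^+ 2 <=
  (\sum_i w i * f i ^+ 2) * (\sum_i w i * g i ^+ 2).
Proof.
set X := \sum_i _; set F := \sum_i _; set G := \sum_i _.
have FG_ij : F * G = \sum_i \sum_j w i * f i ^+ 2 * (w j * g j ^+ 2).
  by rewrite mulr_suml; apply: eq_bigr => i _; rewrite mulr_sumr.
have FG_ji : F * G = \sum_i \sum_j w j * f j ^+ 2 * (w i * g i ^+ 2).
  by rewrite FG_ij exchange_big.
have X2 : 2 * X ^+ 2 = \sum_i \sum_j 2 * (w i * f i * g i * (w j * f j * g j)).
  rewrite expr2 mulr_suml mulr_sumr; apply: eq_bigr => i _.
  by rewrite mulr_sumr mulr_sumr.
have lagrange : \sum_i \sum_j w i * w j * (f i * g j - f j * g i) ^+ 2 =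
    2 * (F * G - X ^+ 2).
  transitivity (\sum_i \sum_j (w i * f i ^+ 2 * (w j * g j ^+ 2)
      + w j * f j ^+ 2 * (w i * g i ^+ 2) - 2 * (w i * f i * g i * (w j * f j * g j)))).
    by apply: eq_bigr => i _; apply: eq_bigr => j _; ring.
  under eq_bigr do rewrite sumrB big_split /=.
  by rewrite sumrB big_split /= -FG_ij -FG_ji -X2; ring.
rewrite -subr_ge0 -(@pmulr_rge0 _ 2) // -lagrange.
by apply: sumr_ge0 => i _; apply: sumr_ge0 => j _; rewrite mulr_ge0 ?sqr_ge0 ?mulr_ge0.
Qed.

Lemma weighted_mean_abs_le (f : I -> R) : \sum_i w i = 1 ->
  (\sum_i w i * `|f i|) ^+ 2 <= \sum_i w i * f i ^+ 2.
Proof.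
move=> w_sum1.
have -> : \sum_i w i * `|f i| = \sum_i w i * 1 * `|f i|.
  by apply: eq_bigr => i _; rewrite mulr1.
apply: le_trans (weighted_CauchySchwarz _ _) _.
rewrite (eq_bigr w) => [|i _]; last by rewrite expr1n mulr1.
by rewrite w_sum1 mul1r; apply: ler_sum => i _; rewrite real_normK ?num_real.
Qed.

End WeightedSums.

Lemma sqr_sqrt_sub1_le {R : rcfType} (T s r : R) : 0 <= T -> 0 <= s -> 0 <= r ->
  `|T - 1| <= s + r -> (Num.sqrt T - 1) ^+ 2 <= 4 * s ^+ 2 + 2 * r.
Proof.
move=> T_ge0 s_ge0 r_ge0 le_Ts.
set q := Num.sqrt T; have q_ge0 : 0 <= q := sqrtr_ge0 T.
rewrite -(sqr_sqrtr T_ge0) -/q in le_Ts.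
(* [q - 1] is [q^2 - 1] divided by [q + 1 >= 1] *)
have le_sqr : (q - 1) ^+ 2 <= (q ^+ 2 - 1) ^+ 2.
  rewrite (_ : q ^+ 2 - 1 = (q - 1) * (q + 1)); last by ring.
  by rewrite exprMn ler_peMr ?sqr_ge0 //; nra.
have le_abs : (q - 1) ^+ 2 <= `|q ^+ 2 - 1|.
  rewrite (_ : q ^+ 2 - 1 = (q - 1) * (q + 1)); last by ring.
  rewrite normrM (ger0_norm (_ : 0 <= q + 1)); last by lra.
  rewrite -real_normK ?num_real // expr2 ler_wpM2l //.
  by rewrite ler_norml; apply/andP; split; lra.
have [le_2s|lt_2s] := lerP `|q ^+ 2 - 1| (2 * s).
  apply: le_trans le_sqr _; rewrite -real_normK ?num_real //.
  by have := normr_ge0 (q ^+ 2 - 1); nra.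
by apply: le_trans le_abs _; nra.
Qed.

Section Hellinger.
Context {R : rcfType} {I : finType}.

Definition hellinger2 (p q : I -> R) : R :=
  \sum_y (Num.sqrt (p y) - Num.sqrt (q y)) ^+ 2.

Lemma hellinger2_le2 (p q : I -> R) :
  (forall y, 0 <= p y) -> (forall y, 0 <= q y) -> \sum_y p y = 1 -> \sum_y q y = 1 ->
  hellinger2 p q <= 2.
Proof.
move=> p_ge0 q_ge0 p_sum1 q_sum1.
apply: le_trans (_ : \sum_y (p y + q y) <= _); last by rewrite big_split /= p_sum1 q_sum1.
apply: ler_sum => y _; rewrite -{2}(sqr_sqrtr (p_ge0 y)) -{2}(sqr_sqrtr (q_ge0 y)).
by have := sqrtr_ge0 (p y); have := sqrtr_ge0 (q y); nra.
Qed.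

End Hellinger.

Section HellingerSquare.
Context {R : rcfType} {n : nat}.
Variables (P : 'M[R]_n.+1) (pi : 'I_n.+1 -> R) (d : R).
Hypothesis P_ge0 : forall x y, 0 <= P x y.
Hypothesis P_sum1 : forall x, \sum_y P x y = 1.
Hypothesis P_rev : forall x y, pi x * P x y = pi y * P y x.
Hypothesis pi_gt0 : forall x, 0 < pi x.
Hypothesis pi_sum1 : \sum_x pi x = 1.
Hypothesis d_ge0 : 0 <= d.
Hypothesis hellinger_le : forall x, hellinger2 (P x) pi <= d ^+ 2.

Let pi_ge0 x : 0 <= pi x. Proof. exact: ltW. Qed.
Let pi_neq0 x : pi x != 0. Proof. by rewrite gt_eqF. Qed.

Let ratio x z := Num.sqrt (P x z / pi z).
Let dev x z := ratio x z - 1.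

Let ratio_ge0 x z : 0 <= ratio x z. Proof. exact: sqrtr_ge0. Qed.

Let pi_ratio_sqr x z : pi z * ratio x z ^+ 2 = P x z.
Proof. by rewrite sqr_sqrtr ?divr_ge0 // mulrCA divff ?mulr1. Qed.

Let ratioC x z : ratio x z = ratio z x.
Proof.
congr Num.sqrt; apply/eqP; rewrite eqr_div //.
by rewrite [P x z * _]mulrC P_rev mulrC.
Qed.

Let hellinger2_dev x : hellinger2 (P x) pi = \sum_z pi z * dev x z ^+ 2.
Proof.
apply: eq_bigr => z _; rewrite -pi_ratio_sqr sqrtrM // sqrtr_sqr ger0_norm //.
by rewrite -[X in _ - X]mulr1 -mulrBr exprMn sqr_sqrtr.
Qed.

Let dev_row_le x : \sum_z pi z * dev x z ^+ 2 <= d ^+ 2.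
Proof. by rewrite -hellinger2_dev. Qed.

Let dev_col_le z : \sum_x pi x * dev x z ^+ 2 <= d ^+ 2.
Proof.
by rewrite (eq_bigr (fun x => pi x * dev z x ^+ 2)) // => x _; rewrite /dev ratioC.
Qed.

Let abs_dev_row_le x : \sum_z pi z * `|dev x z| <= d.
Proof.
rewrite -(ler_pXn2r (_ : 0 < 2)%N) ?nnegrE ?sumr_ge0 // => [|z _].
  exact: le_trans (weighted_mean_abs_le pi_ge0 (dev x) pi_sum1) (dev_row_le x).
by rewrite mulr_ge0.
Qed.

Let abs_dev_col_le z : \sum_x pi x * `|dev x z| <= d.
Proof.
by rewrite (eq_bigr (fun x => pi x * `|dev z x|)) // => x _; rewrite /dev ratioC.
Qed.

Let mix x y := \sum_z pi z * ratio x z ^+ 2 * ratio y z ^+ 2.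
Let corr x y := \sum_z pi z * dev x z * dev y z.
Let rest x y := \sum_z pi z * (2 * `|dev x z| * dev y z ^+ 2
  + 2 * dev x z ^+ 2 * `|dev y z| + dev x z ^+ 2 * dev y z ^+ 2).

Let mulmx_selfE x y : (P * P) x y = pi y * mix x y.
Proof.
rewrite -mulmxE mxE /mix mulr_sumr; apply: eq_bigr => z _.
by rewrite -(pi_ratio_sqr x z) -(pi_ratio_sqr z y) (ratioC z y); ring.
Qed.

Let mix_ge0 x y : 0 <= mix x y.
Proof. by apply: sumr_ge0 => z _; rewrite !mulr_ge0 ?sqr_ge0. Qed.

Let rest_ge0 x y : 0 <= rest x y.
Proof.
apply: sumr_ge0 => z _; apply: mulr_ge0 => //.
have := normr_ge0 (dev x z); have := normr_ge0 (dev y z).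
have := sqr_ge0 (dev x z); have := sqr_ge0 (dev y z); nra.
Qed.

(* Expand [ratio ^+ 2 - 1 = 2 * dev + dev ^+ 2] in both factors. *)
Let mix_sub1_le x y : `|mix x y - 1| <= 4 * `|corr x y| + rest x y.
Proof.
have sum_ratio w : \sum_z pi z * ratio w z ^+ 2 = 1.
  by under eq_bigr do rewrite pi_ratio_sqr; exact: P_sum1.
have -> : mix x y - 1 = 4 * corr x y + \sum_z pi z * (2 * dev x z * dev y z ^+ 2
    + 2 * dev x z ^+ 2 * dev y z + dev x z ^+ 2 * dev y z ^+ 2).
  transitivity (\sum_z (pi z * ratio x z ^+ 2 * ratio y z ^+ 2
      - pi z * ratio x z ^+ 2 - pi z * ratio y z ^+ 2 + pi z)).
    by rewrite big_split /= !sumrB !sum_ratio pi_sum1 /mix; ring.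
  rewrite /corr mulr_sumr -big_split /=; apply: eq_bigr => z _.
  by rewrite /dev; ring.
apply: le_trans (ler_normD _ _) _; rewrite normrM normr_nat lerD2l.
apply: le_trans (ler_norm_sum _ _ _) _; apply: ler_sum => z _.
rewrite normrM ger0_norm // ler_wpM2l //.
apply: le_trans (ler_normD _ _) _.
rewrite [X in _ + X <= _](ger0_norm (mulr_ge0 (sqr_ge0 _) (sqr_ge0 _))).
rewrite lerD2r; apply: le_trans (ler_normD _ _) _.
by rewrite !normrM normr_nat -!expr2 !real_normK ?num_real.
Qed.

Let sum_corr_sqr_le x : \sum_y pi y * corr x y ^+ 2 <= d ^+ 4.
Proof.
apply: le_trans (_ : \sum_y pi y * d ^+ 4 <= _); last by rewrite -mulr_suml pi_sum1 mul1r.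
apply: ler_sum => y _; rewrite ler_wpM2l //.
apply: le_trans (weighted_CauchySchwarz pi_ge0 _ _) _.
rewrite -[4%N]/(2 + 2)%N exprD.
by apply: ler_pM; rewrite ?sumr_ge0 ?dev_row_le // => z _; rewrite mulr_ge0 ?sqr_ge0.
Qed.

(* Summing over [y] first turns the inner sums into column sums of [dev]. *)
Let sum_rest_le x : \sum_y pi y * rest x y <= 4 * d ^+ 3 + d ^+ 4.
Proof.
have -> : \sum_y pi y * rest x y = \sum_z pi z *
    (2 * `|dev x z| * \sum_y pi y * dev y z ^+ 2
     + 2 * dev x z ^+ 2 * \sum_y pi y * `|dev y z|
     + dev x z ^+ 2 * \sum_y pi y * dev y z ^+ 2).
  under eq_bigr do rewrite /rest mulr_sumr.
  rewrite exchange_big /=.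
  apply: eq_bigr => z _; rewrite !mulr_sumr -!big_split mulr_sumr /=.
  by apply: eq_bigr => y _; ring.
apply: le_trans (_ : \sum_z pi z * (2 * d ^+ 2 * `|dev x z|
    + (2 * d + d ^+ 2) * dev x z ^+ 2) <= _).
  apply: ler_sum => z _; rewrite ler_wpM2l //.
  have := dev_col_le z; have := abs_dev_col_le z.
  have := normr_ge0 (dev x z); have := sqr_ge0 (dev x z); nra.
under eq_bigr do rewrite mulrDr mulrCA [pi _ * (_ * _)]mulrCA.
rewrite big_split /= -!mulr_sumr.
apply: le_trans (_ : 2 * d ^+ 2 * d + (2 * d + d ^+ 2) * d ^+ 2 <= _); last first.
  by rewrite le_eqVlt; apply/orP; left; apply/eqP; ring.
by rewrite lerD ?ler_wpM2l ?abs_dev_row_le ?dev_row_le ?addr_ge0 ?mulr_ge0.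
Qed.

Lemma hellinger2_mulmx_self x : hellinger2 ((P * P) x) pi <= 8 * d ^+ 3 + 66 * d ^+ 4.
Proof.
apply: (@le_trans _ _ (\sum_y pi y * (64 * corr x y ^+ 2 + 2 * rest x y))).
  apply: ler_sum => y _; rewrite mulmx_selfE sqrtrM // -[X in _ - X]mulr1.
  rewrite -mulrBr exprMn sqr_sqrtr // ler_wpM2l //.
  apply: le_trans (sqr_sqrt_sub1_le (mix_ge0 x y) _ (rest_ge0 x y) (mix_sub1_le x y)) _.
    by rewrite mulr_ge0.
  by rewrite exprMn real_normK ?num_real //; lra.
under eq_bigr do rewrite mulrDr mulrCA [pi _ * (2 * _)]mulrCA.
rewrite big_split /= -!mulr_sumr.
by have := sum_corr_sqr_le x; have := sum_rest_le x; lra.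
Qed.

End HellingerSquare.

(* Detailed balance propagates [pi a = 0] backwards along positive-rate jumps. *)
Lemma reversible_irreducible_gt0 {R : realType} {n : nat} (Q : 'M[R]_n.+1)
    (pi : 'I_n.+1 -> R) :
  irreducible Q -> is_distribution pi -> reversible Q pi -> forall x, 0 < pi x.
Proof.
move=> Q_irr [pi_ge0 pi_sum1] Q_rev x; rewrite lt_neqAle pi_ge0 andbT.
apply/eqP => pix0; suff pi0 a : pi a = 0.
  by move: pi_sum1; rewrite big1 // => /esym/eqP; rewrite oner_eq0.
have /connectP[p] := Q_irr a x; elim: p a => [|b p IH] a /=; first by move=> _ <-.
case/andP => /andP[_ Qab_gt0] path_bx last_x.
have : pi a * Q a b = 0 by rewrite Q_rev IH ?mul0r.
by move/eqP; rewrite mulf_eq0 (gt_eqF Qab_gt0) orbF => /eqP.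
Qed.

Lemma le_7powR_sqr {R : realType} (d h : R) : 0 <= d -> h <= 2 ->
  h <= 8 * d ^+ 3 + 66 * d ^+ 4 -> h <= (7 * powR d (5 / 4)) ^+ 2.
Proof.
move=> d_ge0 h_le2 h_le; have [d0|d_neq0] := eqVneq d 0.
  by apply: le_trans h_le _; rewrite d0 !expr0n /= !mulr0 addr0 sqr_ge0.
rewrite exprMn; move: h_le.
have [p p_gt0 [-> ->]] :
    exists2 p : R, 0 < p & d = p ^+ 2 /\ powR d (5 / 4) ^+ 2 = p ^+ 5.
  exists (powR d (1 / 2)); first by rewrite powR_gt0 // lt_def d_neq0.
  rewrite -!powR_mulrn ?powR_ge0 // -!powRrM mul1r mulVf ?powRr1 //.
  by split=> //; congr (_ `^ _); field.
rewrite -!exprM /= => h_le.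
have p5_ge0 : 0 <= p ^+ 5 by rewrite exprn_ge0 ?ltW.
have [p_le|p_gt] := lerP p (3 / 5).
  apply: le_trans h_le _.
  rewrite (_ : 8 * _ + _ = p ^+ 5 * (8 * p + 66 * p ^+ 3)); last by ring.
  by rewrite mulrC ler_wpM2r //; nra.
apply: le_trans h_le2 _; apply: le_trans (_ : 49 * (3 / 5) ^+ 5 <= _).
  by rewrite -subr_ge0 /=; lra.
by rewrite -natrX ler_wpM2l // lerXn2r ?nnegrE ?ltW.
Qed.

Section Semigroup.
Context {R : realType} {n : nat}.
Variables (Q : 'M[R]_n.+1) (pi : 'I_n.+1 -> R).

Lemma semigroupE t x y :
  semigroup Q t x y = expmx (t *: Q) x y.
Proof.
rewrite /semigroup mxE; congr (limn _); apply/funext => N.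
rewrite exp_partial_mxE; apply: eq_bigr => k _.
by rewrite exprZn mxE; ring.
Qed.

Lemma semigroup_ge0 s : is_generator Q -> 0 <= s ->
  forall x y, 0 <= expmx (s *: Q) x y.
Proof.
move=> [Q_offdiag _] s_ge0; apply: expmx_offdiag_ge0 => x y neq_xy.
by rewrite mxE mulr_ge0 ?Q_offdiag.
Qed.

Lemma semigroup_sum1 s : is_generator Q -> forall x, \sum_y expmx (s *: Q) x y = 1.
Proof.
move=> [_ Q_sum0]; apply: expmx_rowsum => x.
by under eq_bigr do rewrite mxE; rewrite -mulr_sumr Q_sum0 mulr0.
Qed.

Lemma semigroup_reversible s : reversible Q pi ->
  forall x y, pi x * expmx (s *: Q) x y = pi y * expmx (s *: Q) y x.
Proof.
by move=> Q_rev; apply: expmx_reversible => x y; rewrite !mxE mulrCA Q_rev mulrCA.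
Qed.

Lemma semigroupD s1 s2 : expmx ((s1 + s2) *: Q) = expmx (s1 *: Q) * expmx (s2 *: Q).
Proof.
by rewrite scalerDl expmxD // /GRing.comm -!scalerAl -!scalerAr !scalerA mulrC.
Qed.

Lemma dHE s : dH Q pi s = \big[Num.max/0]_x Num.sqrt (hellinger2 (expmx (s *: Q) x) pi).
Proof.
apply: eq_bigr => x _; congr Num.sqrt; apply: eq_bigr => y _.
by rewrite semigroupE.
Qed.

Lemma hellinger2_le_dH s x : hellinger2 (expmx (s *: Q) x) pi <= dH Q pi s ^+ 2.
Proof.
rewrite -[leLHS]sqr_sqrtr ?sumr_ge0 // => [|y _]; last exact: sqr_ge0.
by rewrite lerXn2r ?nnegrE ?sqrtr_ge0 ?dHE ?bigmax_ge_id ?le_bigmax.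
Qed.

End Semigroup.

Theorem lemma2p3 (R : realType) (n : nat) (Q : 'M[R]_n.+1) (pi : 'I_n.+1 -> R)
  (hQ : is_generator Q) (hirr : irreducible Q)
  (hpi : is_distribution pi) (hstat : stationary Q pi) (hrev : reversible Q pi)
  (t : R) (ht : 0 <= t) :
  dH Q pi (2 * t) <= 7 * powR (dH Q pi t) (5 / 4).
Proof.
have pi_gt0 := reversible_irreducible_gt0 hirr hpi hrev.
have [pi_ge0 pi_sum1] := hpi.
set d := dH Q pi t; have d_ge0 : 0 <= d by rewrite /d dHE bigmax_ge_id.
have P2 : expmx ((2 * t) *: Q) = expmx (t *: Q) * expmx (t *: Q).
  by rewrite -semigroupD -mulr2n mulr_natl.
rewrite dHE P2; apply: bigmax_le => [|x _]; first by rewrite mulr_ge0 ?powR_ge0.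
rewrite -[leRHS]ger0_norm ?mulr_ge0 ?powR_ge0 // -sqrtr_sqr ler_sqrt ?sqr_ge0 //.
apply: (le_7powR_sqr d_ge0).
  rewrite -P2; apply: (hellinger2_le2 _ pi_ge0 _ pi_sum1).
  - by apply: semigroup_ge0; rewrite ?mulr_ge0.
  - exact: semigroup_sum1.
apply: (hellinger2_mulmx_self _ _ _ pi_gt0 pi_sum1 d_ge0).
- exact: semigroup_ge0.
- exact: semigroup_sum1.
- exact: semigroup_reversible.
- exact: hellinger2_le_dH.
Qed.
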